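(* Let $\mathbb{A},\mathbb{B}$ be real square matrices of the same size such that $\mathbb{A}$ is a non-singular symmetric matrix with exactly one negative eigenvalue and $\mathbb{A}\mathbb{B}$ is skew-symmetric. Then $\mathbb{A}+\mathbb{B}$ is invertible and has exactly one negative eigenvalue, whose geometric multiplicity is $1$. *)

From HB Require Import structures.
From mathcomp Require Import all_boot all_order all_algebra.
From mathcomp Require Import reals.
Set Implicit Arguments. Unset Strict Implicit. Unset Printing Implicit Defensive.
Import Order.TTheory GRing.Theory Num.Theory.
Local Open Scope ring_scope.

Definition symmetric_mx (R : realType) (n : nat) (A : 'M[R]_n) : Prop :=
  A^T = A.
Definition skew_mx (R : realType) (n : nat) (A : 'M[R]_n) : Prop :=
  A^T = - A.

(* A has exactly one negative eigenvalue, counted with (algebraic)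
   multiplicity: there is a unique negative real eigenvalue, and it is a
   simple root of the characteristic polynomial. *)
Definition one_neg_eig_with_mult (R : realType) (n : nat) (A : 'M[R]_n) : Prop :=
  exists l : R, [/\ l < 0, eigenvalue A l,
    (forall m : R, m < 0 -> eigenvalue A m -> m = l)
    & mup l (char_poly A) = 1%N].

Definition one_neg_eig_geom1 (R : realType) (n : nat) (A : 'M[R]_n) : Prop :=
  exists l : R, [/\ l < 0, eigenvalue A l,
    (forall m : R, m < 0 -> eigenvalue A m -> m = l)
    & \rank (eigenspace A l) = 1%N].

(* Put S := A B and N := A (A + B) = A ^+ 2 + S.  Since S is skew, x N x^T = |x A|^2,
   so N is invertible; the same holds for A ^+ 2 + t S, whose determinant is therefore
   positive on [0, 1], as it is det(A)^2 at t = 0.  Diagonalizing A shows det A < 0,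
   so det (A + B) < 0 and A + B has a negative eigenvalue.  If v1, v2 were independent
   eigenvectors of A + B for negative eigenvalues l1, l2, then y_i := v_i A^-1 satisfy
   y_i N = l_i y_i A, and polarizing x N x^T = |x A|^2 on span(y1, y2) makes the
   quadratic form of A negative definite on that plane, which a symmetric matrix with
   a single negative eigenvalue forbids. *)

From HB Require Import structures.
From mathcomp Require Import all_boot all_order all_algebra.
From mathcomp Require Import reals ring lra complex polyrcf.
Import Order.TTheory GRing.Theory Num.Theory.
Set Implicit Arguments.
Unset Strict Implicit.
Unset Printing Implicit Defensive.
Local Open Scope ring_scope.

Definition lin_indep2 (K : pzRingType) (V : lmodType K) (u v : V) :=
  forall a b : K, a *: u + b *: v = 0 -> a = 0 /\ b = 0.

Section Eigenvectors.
Variables (F : fieldType) (n : nat) (M : 'M[F]_n).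
Implicit Types (v : 'rV[F]_n) (l : F).

Lemma eigenvectors_lin_indep2 v1 v2 l1 l2 :
  v1 *m M = l1 *: v1 -> v2 *m M = l2 *: v2 -> v1 != 0 -> v2 != 0 -> l1 != l2 ->
  lin_indep2 v1 v2.
Proof.
move=> e1 e2 v1_neq0 v2_neq0 l12 a b comb0.
have combM0 : (a * l1) *: v1 + (b * l2) *: v2 = 0.
  by rewrite -!scalerA -e1 -e2 !scalemxAl -mulmxDl comb0 mul0mx.
have : (a * (l1 - l2)) *: v1 = 0.
  rewrite -[RHS](subr0 0) -{1}combM0 -(scaler0 _ l2) -comb0.
  by apply/rowP => i; rewrite !mxE; ring.
move/eqP; rewrite scaler_eq0 (negbTE v1_neq0) orbF mulf_eq0 subr_eq0 (negbTE l12).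
rewrite orbF => /eqP a0; move: comb0; rewrite a0 scale0r add0r => /eqP.
by rewrite scaler_eq0 (negbTE v2_neq0) orbF => /eqP.
Qed.

Lemma row_free_lin_indep2 m (V : 'M[F]_(m, n)) (i j : 'I_m) :
  row_free V -> i != j -> lin_indep2 (row i V) (row j V).
Proof.
move=> freeV ij a b comb0.
have : (a *: delta_mx 0 i + b *: delta_mx 0 j : 'rV_m) *m V = 0.
  by rewrite mulmxDl -!scalemxAl -!rowE.
move/eqP; rewrite mulmx_free_eq0 // => /eqP/rowP coef0.
have := coef0 i; have := coef0 j.
rewrite !mxE !eqxx (negbTE ij) eq_sym (negbTE ij) /=.
by rewrite !mulr0 !mulr1 addr0 add0r.
Qed.

Lemma eigenvalue_eq_of_lin_dep l1 l2 : eigenvalue M l1 -> eigenvalue M l2 ->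
  (forall v1 v2, v1 *m M = l1 *: v1 -> v2 *m M = l2 *: v2 -> ~ lin_indep2 v1 v2) ->
  l1 = l2.
Proof.
move=> /eigenvalueP [v1 e1 v1_neq0] /eigenvalueP [v2 e2 v2_neq0] dep.
apply/eqP; apply: contraT => l12.
by case: (dep _ _ e1 e2); apply: eigenvectors_lin_indep2 e1 e2 v1_neq0 v2_neq0 l12.
Qed.

Lemma eigenspace_rank_le1_of_lin_dep l :
  (forall v1 v2, v1 *m M = l *: v1 -> v2 *m M = l *: v2 -> ~ lin_indep2 v1 v2) ->
  (\rank (eigenspace M l) <= 1)%N.
Proof.
move=> dep; rewrite leqNgt; apply/negP => rank_gt1.
set E := eigenspace M l.
have eig_row (j : 'I_(\rank E)) : row j (row_base E) *m M = l *: row j (row_base E).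
  by apply/eigenspaceP; rewrite (submx_trans (row_sub j _)) // eq_row_base.
pose j0 : 'I_(\rank E) := Ordinal (ltnW rank_gt1).
pose j1 : 'I_(\rank E) := Ordinal rank_gt1.
apply: (dep _ _ (eig_row j0) (eig_row j1)).
exact: row_free_lin_indep2 (row_base_free E) _.
Qed.

End Eigenvectors.

Lemma char_poly_similar (F : fieldType) (n : nat) (P D : 'M[F]_n) :
  P \in unitmx -> char_poly (invmx P *m D *m P) = char_poly D.
Proof.
move=> unitP; rewrite /char_poly /char_poly_mx.
set Q := map_mx polyC P; set Qinv := map_mx polyC (invmx P).
have QQinv : Q *m Qinv = 1%:M by rewrite -map_mxM mulmxV // map_mx1.
have QinvQ : Qinv *m Q = 1%:M by rewrite -map_mxM mulVmx // map_mx1.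
have -> : 'X%:M - map_mx polyC (invmx P *m D *m P)
    = Qinv *m ('X%:M - map_mx polyC D) *m Q.
  by rewrite mulmxBr mulmxBl mul_mx_scalar -scalemxAl QinvQ scalemx1 !map_mxM.
by rewrite !det_mulmx mulrC mulrA -det_mulmx QQinv det1 mul1r.
Qed.

Lemma det_lt0_neg_eigenvalue (R : rcfType) (n : nat) (M : 'M[R]_n) :
  \det M < 0 -> exists2 l, l < 0 & eigenvalue M l.
Proof.
move=> detM_lt0; pose p := char_poly (- M).
have p0_lt0 : p.[0] < 0.
  rewrite horner_coef0 char_poly_det -scaleN1r detZ mulrA -exprMn mulrNN mulr1.
  by rewrite expr1n mul1r.
have lead_p : lead_coef p = 1 by apply/monicP; apply: char_poly_monic.
have lead_gt0 : 0 < lead_coef p by rewrite lead_p ltr01.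
have [K p_ge1] := poly_pinfty_gt_lc lead_gt0.
have pK_gt0 : 0 < p.[Num.max K 0].
  by rewrite (lt_le_trans _ (p_ge1 _ _)) ?lead_p ?ltr01 ?le_max ?lexx.
have K0 : 0 <= Num.max K 0 by rewrite le_max lexx orbT.
have sign_change : p.[0] * p.[Num.max K 0] < 0 by rewrite pmulr_llt0.
have [x] := poly_ivtoo K0 sign_change.
rewrite in_itv /= => /andP [x_gt0 _] root_x.
exists (- x); first by rewrite oppr_lt0.
have /eigenvalueP [v vM v_neq0] : eigenvalue (- M) x by rewrite eigenvalue_root_char.
by apply/eigenvalueP; exists v; rewrite // scaleNr -vM mulmxN opprK.
Qed.

Lemma binary_form_pos_def (R : realFieldType) (p q r : R) :
  (forall a b, (a != 0) || (b != 0) -> 0 < p * a ^+ 2 + q * a * b + r * b ^+ 2)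
  <-> 0 < p /\ q ^+ 2 < 4 * p * r.
Proof.
split=> [pos | [p_gt0 disc] a b ab].
  have p_gt0 : 0 < p by have := pos 1 0; rewrite oner_neq0 expr1n; lra.
  split=> //; have /pos : (q != 0) || (- (2 * p) != 0).
    by rewrite orbC; apply/orP; left; lra.
  have -> : p * q ^+ 2 + q * q * - (2 * p) + r * (- (2 * p)) ^+ 2
    = p * (4 * p * r - q ^+ 2) by ring.
  by rewrite pmulr_rgt0 // subr_gt0.
rewrite -(pmulr_rgt0 _ (_ : 0 < 4 * p)); last by lra.
have -> : 4 * p * (p * a ^+ 2 + q * a * b + r * b ^+ 2)
  = (2 * p * a + q * b) ^+ 2 + (4 * p * r - q ^+ 2) * b ^+ 2 by ring.
have [b0 | b_neq0] := eqVneq b 0.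
  rewrite b0 eqxx orbF in ab; rewrite b0 expr0n mulr0 addr0 mulr0 addr0.
  by rewrite exprn_even_gt0 //= mulf_neq0 // mulf_neq0 ?pnatr_eq0 ?gt_eqF.
by rewrite ltr_wpDl ?sqr_ge0 // mulr_gt0 ?subr_gt0 // exprn_even_gt0.
Qed.

Section RealForms.
Variables (R : realFieldType) (n : nat).
Implicit Types (M N : 'M[R]_n) (u v : 'rV[R]_n).

Lemma formT M u v : form idfun M u v = form idfun M^T v u.
Proof.
rewrite /form !map_mx_id // -[in LHS](trmxK (u *m M *m v^T)) mxE.
by rewrite !trmx_mul trmxK mulmxA.
Qed.

Lemma form_mxD M N u v :
  form idfun (M + N) u v = form idfun M u v + form idfun N u v.
Proof. by rewrite /form mulmxDr mulmxDl mxE. Qed.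

Lemma form_mulmx M N u v :
  form idfun (M *m N) u v = form idfun 1%:M (u *m M) (v *m N^T).
Proof. by rewrite /form !map_mx_id // mulmx1 trmx_mul trmxK !mulmxA. Qed.

Lemma form1_gt0 u : u != 0 -> 0 < form idfun 1%:M u u.
Proof.
move=> u_neq0; rewrite /form map_mx_id // mulmx1 mxE.
have sq_ge0 i : 0 <= u 0 i * u^T i 0 by rewrite mxE -expr2 sqr_ge0.
rewrite lt_def sumr_ge0 ?andbT //; apply: contra u_neq0.
rewrite psumr_eq0 // => /allP u0; apply/eqP/rowP => i; rewrite mxE.
have /implyP/(_ isT) := u0 i (mem_index_enum i).
by rewrite mxE mulf_eq0 orbb => /eqP.
Qed.

Variables (A S : 'M[R]_n).
Hypotheses (symA : A^T = A) (skewS : S^T = - S).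

Lemma form_sqr_add_skew u v :
  form idfun (A *m A + S) u v + form idfun (A *m A + S) v u
  = 2 * form idfun 1%:M (u *m A) (v *m A).
Proof.
have -> : 2 * form idfun 1%:M (u *m A) (v *m A) = form idfun (A *m (2 *: A)) u v.
  by rewrite form_mulmx linearZ /= symA -scalemxAr formZr.
rewrite [form _ _ v u]formT -form_mxD linearD /= trmx_mul symA skewS.
by rewrite addrACA subrr addr0 -scalemxAr scaler_nat mulr2n.
Qed.

Lemma form_sqr_add_skew_diag u :
  form idfun (A *m A + S) u u = form idfun 1%:M (u *m A) (u *m A).
Proof.
apply: (mulfI (_ : 2 != 0)); first by rewrite pnatr_eq0.
by rewrite -form_sqr_add_skew mulr2n mulrDl mul1r.
Qed.

Lemma sqr_add_skew_unitmx : A \in unitmx -> A *m A + S \in unitmx.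
Proof.
move=> unitA; rewrite -row_free_unit -kermx_eq0.
apply/rowV0P => x /sub_kermxP xN0.
have : ~~ (0 < form idfun 1%:M (x *m A) (x *m A)).
  by rewrite -form_sqr_add_skew_diag /form xN0 mul0mx mxE ltxx.
move/(contra (@form1_gt0 (x *m A))); rewrite negbK.
by rewrite mulmx_free_eq0 ?row_free_unit // => /eqP.
Qed.

Lemma form_neg_def_of_neg_eigvecs y1 y2 l1 l2 :
  y1 *m (A *m A + S) = l1 *: (y1 *m A) -> y2 *m (A *m A + S) = l2 *: (y2 *m A) ->
  l1 < 0 -> l2 < 0 -> lin_indep2 (y1 *m A) (y2 *m A) ->
  forall a b, (a != 0) || (b != 0) ->
  form idfun A (a *: y1 + b *: y2) (a *: y1 + b *: y2) < 0.
Proof.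
move=> eig1 eig2 l1_lt0 l2_lt0 indep.
have eigform1 w : form idfun (A *m A + S) y1 w = l1 * form idfun A y1 w.
  by rewrite /form eig1 -scalemxAl mxE.
have eigform2 w : form idfun (A *m A + S) y2 w = l2 * form idfun A y2 w.
  by rewrite /form eig2 -scalemxAl mxE.
have formC w z : form idfun A w z = form idfun A z w by rewrite formT symA.
set q1 := form idfun A y1 y1; set q2 := form idfun A y2 y2.
set c := form idfun A y1 y2.
have gram_pos a b : (a != 0) || (b != 0) ->
    0 < (l1 * q1) * a ^+ 2 + ((l1 + l2) * c) * a * b + (l2 * q2) * b ^+ 2.
  move=> ab; have : a *: (y1 *m A) + b *: (y2 *m A) != 0.
    by apply: contraTneq ab => /indep [-> ->]; rewrite eqxx.
  rewrite !scalemxAl -mulmxDl => /form1_gt0.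
  rewrite -form_sqr_add_skew_diag !(formDl, formDr, formZl, formZr) /=.
  rewrite !(eigform1, eigform2) (formC y2 y1) -/q1 -/q2 -/c.
  by congr (0 < _); ring.
(* [gram_pos] is positive definite and 4 l1 l2 <= (l1 + l2)^2, so the form
   q1 a^2 + 2 c a b + q2 b^2 of A on span(y1, y2) is negative definite. *)
have [l1q1_gt0 disc] := (binary_form_pos_def _ _ _).1 gram_pos.
have amgm : 4 * (l1 * l2) <= (l1 + l2) ^+ 2 by have := sqr_ge0 (l1 - l2); lra.
have q1_lt0 : q1 < 0 by nra.
have cq : c ^+ 2 < q1 * q2.
  have l12_gt0 : 0 < l1 * l2 by nra.
  rewrite -(ltr_pM2l l12_gt0); nra.
have neg_def := (@binary_form_pos_def _ (- q1) (- (2 * c)) (- q2)).2.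
have /neg_def {}neg_def : 0 < - q1 /\ (- (2 * c)) ^+ 2 < 4 * - q1 * - q2.
  by split; nra.
move=> a b /neg_def; rewrite !(formDl, formDr, formZl, formZr) /= (formC y2 y1).
by rewrite -/q1 -/q2 -/c; lra.
Qed.

End RealForms.

Lemma det_sqr_add_skew_gt0 (R : rcfType) (n : nat) (A S : 'M[R]_n) :
  A^T = A -> A \in unitmx -> S^T = - S -> 0 < \det (A *m A + S).
Proof.
move=> symA unitA skewS.
pose p := \det (map_mx polyC (A *m A) + 'X *: map_mx polyC S).
have p_eval t : p.[t] = \det (A *m A + t *: S).
  rewrite -horner_evalE -det_map_mx; congr (\det _).
  by apply/matrixP => i j; rewrite !mxE /= /horner_eval !hornerE.
have p_neq0 t : p.[t] != 0.
  rewrite p_eval -unitfE -unitmxE.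
  by apply: sqr_add_skew_unitmx; rewrite // linearZ /= skewS scalerN.
have p0_gt0 : 0 < p.[0].
  by rewrite p_eval scale0r addr0 det_mulmx -expr2 exprn_even_gt0 // -unitfE -unitmxE.
rewrite -[S]scale1r -p_eval ltNge; apply/negP => p1_le0.
have [t _ /rootP pt0] := polyrcf.poly_ivt ler01 (mulr_ge0_le0 (ltW p0_gt0) p1_le0).
by move: (p_neq0 t); rewrite pt0 eqxx.
Qed.

Section ComplexifiedSymmetric.
Variables (R : rcfType) (n : nat) (A : 'M[R]_n).
Hypothesis symA : A^T = A.
Local Open Scope sesquilinear_scope.
Local Notation toC := (real_complex R).
Local Notation Ac := (map_mx toC A).
Local Notation P := (spectralmx Ac).
Local Notation d := (spectral_diag Ac).

Lemma complexified_hermsym : Ac \is hermsymmx.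
Proof.
apply: realsym_hermsym; last by apply/mxOverP => i j; rewrite mxE complex_real.
by rewrite is_hermitianmxE expr0 scale1r map_mx_id // map_trmx symA.
Qed.

Lemma complexified_spectral : Ac = invmx P *m diag_mx d *m P.
Proof. exact/orthomx_spectralP/hermitian_normalmx/complexified_hermsym. Qed.

Lemma spectral_diag_real i : d 0 i \is Num.real.
Proof. exact: mxOverP (hermitian_spectral_diag_real complexified_hermsym) 0 i. Qed.

Lemma char_poly_complexified : char_poly Ac = \prod_i ('X - (d 0 i)%:P).
Proof.
rewrite {1}complexified_spectral char_poly_similar ?spectral_unit //.
rewrite char_poly_trig ?diag_mx_is_trig //.
by apply: eq_bigr => i _; rewrite mxE eqxx mulr1n.
Qed.

Lemma eigenvalue_spectral_diag i (r : R) : d 0 i = toC r -> eigenvalue A r.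
Proof.
move=> dr; rewrite -(eigenvalue_map toC) eigenvalue_root_char.
rewrite char_poly_complexified /root horner_prod; apply/prodf_eq0.
by exists i => //; rewrite !hornerE dr subrr.
Qed.

Lemma complexified_det : toC (\det A) = \prod_i d 0 i.
Proof.
rewrite -det_map_mx {1}complexified_spectral !det_mulmx mulrC mulrA -det_mulmx.
by rewrite mulmxV ?spectral_unit // det1 mul1r det_diag.
Qed.

Lemma complexified_formE z :
  form Num.conj Ac z z = \sum_k d 0 k * `|(z *m P^t*) 0 k| ^+ 2.
Proof.
have PzE : P *m z^t* = (z *m P^t*)^t* by rewrite trmx_mul map_mxM trmxCK.
rewrite /form {1}complexified_spectral invmx_unitary ?spectral_unitarymx //.
rewrite !mulmxA -(mulmxA _ P) PzE mxE; apply: eq_bigr => k _.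
set w := z *m P^t*; by rewrite mul_mx_diag !mxE normCK mulrAC mulrC.
Qed.

Lemma complexified_form_rect (x1 x2 : 'rV[R]_n) :
  let z := map_mx toC x1 + 'i *: map_mx toC x2 in
  form Num.conj Ac z z = toC (form idfun A x1 x1 + form idfun A x2 x2).
Proof.
have formC x y :
    form Num.conj Ac (map_mx toC x) (map_mx toC y) = toC (form idfun A x y).
  rewrite /form; have -> : (map_mx toC y)^t* = map_mx toC y^T.
    by apply/matrixP => i j; rewrite !mxE conj_Creal ?complex_real.
  by rewrite -!map_mxM mxE map_mx_id.
have sym21 : form idfun A x2 x1 = form idfun A x1 x2 by rewrite formT symA.
rewrite /= !(formDl, formDr, formZl, formZr) /= !formC sym21 conjCi rmorphD /=.
by rewrite !mulNr mulrN mulrA -expr2 sqrCi mulN1r opprK addrA addrNK.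
Qed.

Section OneNegativeEigenvalue.
Variable l : R.
Hypotheses (l_lt0 : l < 0) (eig_l : eigenvalue A l).
Hypotheses (l_uniq : forall m, m < 0 -> eigenvalue A m -> m = l).
Hypothesis (mup_l : mup l (char_poly A) = 1%N).

Lemma spectral_diag_one_neg :
  exists2 i0, d 0 i0 < 0 & forall k, k != i0 -> 0 <= d 0 k.
Proof.
have neg_eq k : d 0 k < 0 -> d 0 k = toC l.
  have /complex_realP [r dr] := spectral_diag_real k.
  rewrite dr -(rmorph0 toC) ltcR => r_lt0.
  by rewrite (l_uniq r_lt0 (eigenvalue_spectral_diag dr)).
have [i0 di0] : exists i0, d 0 i0 = toC l.
  have : root (char_poly Ac) (toC l) by rewrite -eigenvalue_root_char eigenvalue_map.
  rewrite char_poly_complexified /root horner_prod => /prodf_eq0 [i0 _].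
  by rewrite !hornerE subr_eq0 => /eqP/esym di0; exists i0.
exists i0; first by rewrite di0 -(rmorph0 toC) ltcR.
move=> k k_neq_i0; rewrite real_leNgt ?real0 ?spectral_diag_real //.
apply/negP => /neg_eq dk.
suff : (2 <= mup l (char_poly A))%N by rewrite mup_l.
rewrite mup_geq ?monic_neq0 ?char_poly_monic //.
rewrite -(dvdp_map toC) map_char_poly rmorphXn /= map_polyXsubC.
have i0_neq_k : i0 != k by rewrite eq_sym.
rewrite char_poly_complexified (bigD1 i0) // (bigD1 k) //=.
by rewrite expr2 -{1}di0 -dk; apply: dvdp_mul (dvdpp _) (dvdp_mulIl _ _).
Qed.

Lemma det_one_neg_eig_lt0 : A \in unitmx -> \det A < 0.
Proof.
move=> unitA; have [i0 di0_lt0 dk_ge0] := spectral_diag_one_neg.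
have det_neq0 : \prod_k d 0 k != 0.
  by rewrite -complexified_det fmorph_eq0 -unitfE -unitmxE.
rewrite -ltcR rmorph0 complexified_det (bigD1 i0) //= pmulr_llt0 //.
apply: prodr_gt0 => k k_neq_i0; rewrite lt_def dk_ge0 // andbT.
apply: contraTneq det_neq0 => dk0; rewrite negbK; apply/prodf_eq0.
by exists k; rewrite // dk0.
Qed.

Lemma one_neg_eig_not_neg_def2 (y1 y2 : 'rV[R]_n) :
  ~ (forall a b, (a != 0) || (b != 0) ->
     form idfun A (a *: y1 + b *: y2) (a *: y1 + b *: y2) < 0).
Proof.
pose Q a b := form idfun A (a *: y1 + b *: y2) (a *: y1 + b *: y2).
move=> neg_def; have Q_lt0 a b : (a != 0) || (b != 0) -> Q a b < 0 := neg_def a b.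
have Q_le0 a b : Q a b <= 0.
  have [/Q_lt0/ltW // | ] := boolP ((a != 0) || (b != 0)).
  by rewrite negb_or !negbK => /andP [/eqP -> /eqP ->]; rewrite /Q !scale0r addr0 form0l.
have [i0 di0_lt0 dk_ge0] := spectral_diag_one_neg.
set Y1 := map_mx toC y1; set Y2 := map_mx toC y2.
set al := (Y1 *m P^t*) 0 i0; set be := (Y2 *m P^t*) 0 i0.
(* A nonzero complex combination z of y1, y2 orthogonal to the negative eigenvector
   (row i0 of P) has a nonnegative hermitian A-form, which is the sum of the real
   A-forms of the real and imaginary parts of z. *)
have [a [b [ab_neq0 coord0]]] :
    exists a b, (a != 0) || (b != 0) /\ a * al + b * be = 0.
  have [al0 | al_neq0] := eqVneq al 0.
    by exists 1, 0; rewrite oner_neq0 al0 mulr0 mul0r addr0.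
  by exists be, (- al); rewrite oppr_eq0 al_neq0 orbT mulNr mulrC subrr.
have : 0 <= form Num.conj Ac (a *: Y1 + b *: Y2) (a *: Y1 + b *: Y2).
  rewrite complexified_formE; apply: sumr_ge0 => k _.
  have [-> | /dk_ge0 dk] := eqVneq k i0; last by rewrite mulr_ge0 ?exprn_ge0.
  rewrite mulmxDl -!scalemxAl [fun_of_matrix (_ + _) _ _]mxE.
  by rewrite 2![fun_of_matrix (_ *: _) _ _]mxE coord0 normr0 expr0n mulr0.
have -> : a *: Y1 + b *: Y2 = map_mx toC (complex.Re a *: y1 + complex.Re b *: y2)
    + 'i *: map_mx toC (complex.Im a *: y1 + complex.Im b *: y2).
  apply/matrixP => i j; rewrite !mxE {1}(complexE a) {1}(complexE b).
  rewrite !rmorphD !rmorphM /=.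
  by rewrite (_ : 'i%C = 'i); [ring | ].
rewrite complexified_form_rect -(rmorph0 toC) lecR -/(Q _ _) -/(Q _ _) => Q_ge0.
move: ab_neq0; rewrite !eq_complex /= !negb_and.
have [re_neq0 _ | ] := boolP ((complex.Re a != 0) || (complex.Re b != 0)).
  by have := Q_lt0 _ _ re_neq0; have := Q_le0 (complex.Im a) (complex.Im b); lra.
rewrite negb_or !negbK => /andP [/eqP re_a /eqP re_b].
rewrite re_a re_b in Q_ge0; rewrite re_a re_b eqxx /= => /Q_lt0.
by have := Q_le0 0 0; lra.
Qed.

End OneNegativeEigenvalue.

End ComplexifiedSymmetric.

Lemma neg_eigenvectors_lin_dep (R : realType) (n : nat) (A B : 'M[R]_n) :
  A^T = A -> A \in unitmx -> one_neg_eig_with_mult A -> (A *m B)^T = - (A *m B) ->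
  forall (v1 v2 : 'rV[R]_n) l1 l2,
  v1 *m (A + B) = l1 *: v1 -> v2 *m (A + B) = l2 *: v2 -> l1 < 0 -> l2 < 0 ->
  ~ lin_indep2 v1 v2.
Proof.
move=> symA unitA [l [l_lt0 eig_l l_uniq mup_l]] skewAB v1 v2 l1 l2 e1 e2.
move=> l1_lt0 l2_lt0 indep.
have yAE (v : 'rV_n) : v *m invmx A *m A = v by rewrite mulmxKV.
have eig_y (v : 'rV_n) k : v *m (A + B) = k *: v ->
    v *m invmx A *m (A *m A + A *m B) = k *: (v *m invmx A *m A).
  by move=> vAB; rewrite -mulmxDr mulmxA !yAE.
apply: (one_neg_eig_not_neg_def2 symA l_lt0 eig_l l_uniq mup_l
  (y1 := v1 *m invmx A) (y2 := v2 *m invmx A)).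
apply: (form_neg_def_of_neg_eigvecs symA skewAB (eig_y _ _ e1) (eig_y _ _ e2)) => //.
by rewrite !yAE.
Qed.

Theorem lemma4p4 (R : realType) (n : nat) (A B : 'M[R]_n) :
  symmetric_mx A -> A \in unitmx -> one_neg_eig_with_mult A ->
  skew_mx (A *m B) ->
  (A + B) \in unitmx /\ one_neg_eig_geom1 (A + B).
Proof.
rewrite /symmetric_mx /skew_mx => symA unitA oneA skewAB.
have AM : A *m (A + B) = A *m A + A *m B by rewrite mulmxDr.
have unitN := sqr_add_skew_unitmx symA skewAB unitA.
have unitM : A + B \in unitmx by move: unitN; rewrite -AM unitmx_mul => /andP [].
split=> //.
have detM_lt0 : \det (A + B) < 0.
  have [l [l_lt0 eig_l l_uniq mup_l]] := oneA.
  have detA_lt0 := det_one_neg_eig_lt0 symA l_lt0 eig_l l_uniq mup_l unitA.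
  by have := det_sqr_add_skew_gt0 symA unitA skewAB; rewrite -AM det_mulmx nmulr_rgt0.
have [x x_lt0 eig_x] := det_lt0_neg_eigenvalue detM_lt0.
have dep := neg_eigenvectors_lin_dep symA unitA oneA skewAB.
exists x; split=> // [m m_lt0 eig_m|].
  apply: eigenvalue_eq_of_lin_dep eig_m eig_x _ => v1 v2 e1 e2.
  exact: (dep _ _ _ _ e1 e2 m_lt0 x_lt0).
apply/eqP; rewrite eqn_leq lt0n mxrank_eq0 [_ != 0]eig_x andbT.
apply: eigenspace_rank_le1_of_lin_dep => v1 v2 e1 e2.
exact: (dep _ _ _ _ e1 e2 x_lt0 x_lt0).
Qed.
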